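(* Let $h$ be a hive which is a vertex (extreme point) of the polytope of all hives having the same border labels as $h$, and suppose every flatspace of $h$ is a small triangle or a small rhombus. Then for every hive vertex $v\in H$, the label $h(v)$ is an integer linear combination of the border labels $h(b)$, $b\in B$.
   Context: Fix $n\ge1$. Hive vertices: $H=\{(p,q)\in\mathbb{Z}^2:p,q\ge0,\ p+q\le n\}$, placed in the plane at $p(1,0)+q(1/2,\sqrt3/2)$, forming a big triangle subdivided into $n^2$ small unit triangles. A rhombus is the union of two small triangles sharing an edge; for integers $p,q\ge0$ with $p+q\le n-2$ the rhombus inequalities are $h(p+1,q)+h(p,q+1)\ge h(p,q)+h(p+1,q+1)$, $h(p+1,q)+h(p+1,q+1)\ge h(p,q+1)+h(p+2,q)$, $h(p,q+1)+h(p+1,q+1)\ge h(p+1,q)+h(p,q+2)$ (obtuse-vertex sum $\ge$ acute-vertex sum). A hive is $h:H\to\mathbb{R}$ satisfying all of them. Border $B$: vertices with $p=0$, $q=0$ or $p+q=n$; the set of hives with prescribed values on $B$ is a compact polytope. A rhombus is flat if its inequality holds with equality. Flatspaces are the unions of small triangles in the classes of the equivalence relation generated by ''share an edge and form a flat rhombus''; a small rhombus flatspace is one consisting of exactly two small triangles. *)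

From Stdlib Require Import Relations.Relation_Operators.
From mathcomp Require Import all_boot all_order all_algebra.
Set Implicit Arguments. Unset Strict Implicit. Unset Printing Implicit Defensive.
Import Order.TTheory GRing.Theory Num.Theory.
Local Open Scope ring_scope.

(* A labelling of the hive vertices: only values at (p,q) with p+q <= n matter. *)
Definition labelling (R : Type) := nat -> nat -> R.

Definition in_H (n p q : nat) : bool := (p + q <= n)%N.
Definition in_B (n p q : nat) : bool :=
  in_H n p q && [|| p == 0%N, q == 0%N | (p + q == n)%N].

Definition is_hive (R : realFieldType) (n : nat) (h : labelling R) : Prop :=
  forall p q : nat, (p + q + 2 <= n)%N ->
    [/\ h p.+1 q + h p q.+1 >= h p q + h p.+1 q.+1,
        h p.+1 q + h p.+1 q.+1 >= h p q.+1 + h p.+2 q &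
        h p q.+1 + h p.+1 q.+1 >= h p.+1 q + h p q.+2].

Definition same_border (R : Type) (n : nat) (h h' : labelling R) : Prop :=
  forall p q : nat, in_B n p q -> h' p q = h p q.

Definition hive_vertex (R : realFieldType) (n : nat) (h : labelling R) : Prop :=
  is_hive n h /\
  forall (h1 h2 : labelling R) (t : R),
    is_hive n h1 -> same_border n h h1 ->
    is_hive n h2 -> same_border n h h2 ->
    0 < t -> t < 1 ->
    (forall p q, in_H n p q -> h p q = t * h1 p q + (1 - t) * h2 p q) ->
    forall p q, in_H n p q -> h1 p q = h2 p q.

(* small triangles: upright Up p q with vertices (p,q),(p+1,q),(p,q+1)  (p+q <= n-1);
   inverted Down p q with vertices (p+1,q),(p,q+1),(p+1,q+1)  (p+q <= n-2). *)
Inductive small_triangle : Type := Up of nat & nat | Down of nat & nat.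

Definition valid_triangle (n : nat) (T : small_triangle) : Prop :=
  match T with
  | Up p q => (p + q + 1 <= n)%N
  | Down p q => (p + q + 2 <= n)%N
  end.

(* Every rhombus consists of an inverted triangle Down p q and one of its three
   upright neighbours; it is flat iff its inequality is an equality. *)
Inductive flat_step (R : realFieldType) (n : nat) (h : labelling R)
  : small_triangle -> small_triangle -> Prop :=
  | flat1 p q : (p + q + 2 <= n)%N ->
      h p.+1 q + h p q.+1 = h p q + h p.+1 q.+1 ->
      flat_step n h (Down p q) (Up p q)
  | flat2 p q : (p + q + 2 <= n)%N ->
      h p.+1 q + h p.+1 q.+1 = h p q.+1 + h p.+2 q ->
      flat_step n h (Down p q) (Up p.+1 q)
  | flat3 p q : (p + q + 2 <= n)%N ->
      h p q.+1 + h p.+1 q.+1 = h p.+1 q + h p q.+2 ->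
      flat_step n h (Down p q) (Up p q.+1).

(* the equivalence relation generated by "share an edge and form a flat rhombus";
   its classes (of valid triangles) are the flatspaces *)
Definition same_flatspace (R : realFieldType) (n : nat) (h : labelling R) :
  small_triangle -> small_triangle -> Prop :=
  clos_refl_sym_trans small_triangle (flat_step n h).

(* every flatspace is a small triangle or a small rhombus, i.e. every
   flatspace contains at most two small triangles *)
Definition flatspaces_small (R : realFieldType) (n : nat) (h : labelling R) : Prop :=
  forall T T1 T2 : small_triangle,
    valid_triangle n T -> valid_triangle n T1 -> valid_triangle n T2 ->
    same_flatspace n h T T1 -> same_flatspace n h T T2 ->
    T1 = T \/ T2 = T \/ T1 = T2.

Definition int_comb_border (R : realFieldType) (n : nat) (h : labelling R) (x : R) : Prop :=
  exists c : nat -> nat -> int,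
    x = \sum_(p < n.+1) \sum_(q < n.+1 | in_B n p q) (c p q)%:~R * h p q.

From Stdlib Require Import ClassicalEpsilon Classical Relations.Relation_Operators.
From mathcomp Require Import all_boot all_order all_algebra.
From mathcomp Require Import zify ring lra.
Set Implicit Arguments. Unset Strict Implicit. Unset Printing Implicit Defensive.
Import Order.TTheory GRing.Theory Num.Theory.

(* Call a real number good if it lies in the additive group generated
   by the border labels, and label each edge by the difference of its endpoint
   labels. Edge labels sum to zero around a small triangle, opposite sides of a
   flat rhombus carry equal labels, and border edges are good. Hence a bad edge
   can always be continued: through a small triangle that is its own flatspace
   by a second bad side, through a flat rhombus straight to the opposite side.
   Such a walk never reaches the border, so it closes up into a cycle crossing
   pairwise distinct edges. Its signed crossing numbers, corrected on the
   diagonals of flat rhombi, sum to zero around every small triangle, so they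
   are the edge labels of a labelling g that vanishes on the border, keeps every
   flat rhombus of h flat and is nonzero on the first edge of the cycle. Then
   h + eps g and h - eps g are hives with the border of h for small eps > 0,
   so h is not a vertex. *)

(* (true, p, q) stands for [Up p q] and (false, p, q) for [Down p q]. The edge
   (k, a, b) joins (a, b) to (a+1, b) if k = 0, (a, b) to (a, b+1) if k = 1, and
   (a+1, b) to (a, b+1) if k = 2; [tri_edge T k] is the side of T of direction k
   and [across T k] the triangle on the other side of it. *)
Definition tri := (bool * nat * nat)%type.
Definition edge := (nat * nat * nat)%type.

Definition tri_edge (T : tri) (k : nat) : edge :=
  let: (u, p, q) := T in
  if u then (k, p, q) else
  match k with 0 => (0, p, q.+1) | 1 => (1, p.+1, q) | _ => (k, p, q) end.

Definition across (T : tri) (k : nat) : tri :=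
  let: (u, p, q) := T in
  if u then match k with 0 => (false, p, q.-1) | 1 => (false, p.-1, q) | _ => (false, p, q) end
  else match k with 0 => (true, p, q.+1) | 1 => (true, p.+1, q) | _ => (true, p, q) end.

(* For a side on one of the axes p = 0, q = 0, [across] returns junk because of
   the truncated predecessor. *)
Definition off_axes (e : edge) : bool :=
  let: (k, a, b) := e in match k with 0 => 0 < b | 1 => 0 < a | _ => true end.

Definition is_up (T : tri) : bool := T.1.1.

Lemma acrossK T k : k < 3 -> off_axes (tri_edge T k) -> across (across T k) k = T.
Proof.
case: T => [[u p q]]; case: u; case: k => [|[|[|k]]] //= _;
  try (case: q => [|q] //=); try (case: p => [|p] //=).
Qed.

Lemma tri_edge_across T k : k < 3 -> off_axes (tri_edge T k) ->
  tri_edge (across T k) k = tri_edge T k.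
Proof.
case: T => [[u p q]]; case: u; case: k => [|[|[|k]]] //= _;
  try (case: q => [|q] //=); try (case: p => [|p] //=).
Qed.

Lemma tri_edge_inj X Y k k' : k < 3 -> k' < 3 -> tri_edge X k = tri_edge Y k' ->
  k = k' /\ (Y = X \/ Y = across X k).
Proof.
case: X => [[u p q]]; case: Y => [[u' p' q']].
case: u; case: u'; case: k => [|[|[|k]]] //=; case: k' => [|[|[|k']]] //= _ _ [] //;
  intros; subst; auto.
Qed.

Lemma is_up_across T k : is_up (across T k) = ~~ is_up T.
Proof. by case: T => [[u p q]]; case: u; case: k => [|[|[|k]]]. Qed.

Lemma across_neq T k : across T k != T.
Proof. by apply/eqP => E; have := is_up_across T k; rewrite E; case: (is_up T). Qed.

Lemma tri_edge_kind T k : (tri_edge T k).1.1 = k.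
Proof. by case: T => [[u p q]]; case: u; case: k => [|[|[|k]]]. Qed.

Lemma across_inj T j j' : j < 3 -> j' < 3 ->
  off_axes (tri_edge T j) -> off_axes (tri_edge T j') ->
  across T j = across T j' -> j = j'.
Proof.
case: T => [[u p q]]; case: u; case: j => [|[|[|j]]] //=; case: j' => [|[|[|j']]] //=;
  move=> _ _; try (case: p => [|p]); try (case: q => [|q]) => //= _ _ [] //; lia.
Qed.

Section Grid.
Variable n : nat.

Definition valid_tri (T : tri) : bool :=
  let: (u, p, q) := T in if u then p + q + 1 <= n else p + q + 2 <= n.

Definition valid_edge (e : edge) : bool :=
  let: (k, a, b) := e in (k < 3) && (a + b + 1 <= n).

Definition border_edge (e : edge) : bool :=
  let: (k, a, b) := e in
  match k with 0 => b == 0 | 1 => a == 0 | _ => a + b + 1 == n end.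

Lemma valid_tri_edge T k : valid_tri T -> k < 3 -> valid_edge (tri_edge T k).
Proof. case: T => [[u p q]]; case: u; case: k => [|[|[|k]]] //=; lia. Qed.

Lemma nonborder_off_axes e : valid_edge e -> ~~ border_edge e -> off_axes e.
Proof. case: e => [[k a b]]; case: k => [|[|[|k]]] //=; lia. Qed.

Lemma valid_across T k : valid_tri T -> k < 3 -> ~~ border_edge (tri_edge T k) ->
  valid_tri (across T k).
Proof. case: T => [[u p q]]; case: u; case: k => [|[|[|k]]] //=; lia. Qed.

End Grid.

Definition to_small (T : tri) : small_triangle :=
  if is_up T then Up T.1.2 T.2 else Down T.1.2 T.2.

Lemma to_small_inj : injective to_small.
Proof. by case=> [[[] p q]] [[[] p' q']] //= [-> ->]. Qed.

Lemma valid_to_small n T : valid_tri n T -> valid_triangle n (to_small T).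
Proof. by case: T => [[[] p q]]. Qed.

Section Labels.
Variables (R : realFieldType) (n : nat).
Local Open Scope ring_scope.

(* Edges are oriented so that the labels of the sides of any small triangle sum
   to zero. *)
Definition edge_label (f : labelling R) (e : edge) : R :=
  let: (k, a, b) := e in
  match k with
  | 0%N => f a.+1 b - f a b
  | 1%N => f a b - f a b.+1
  | _ => f a b.+1 - f a.+1 b
  end.

Lemma edge_label_tri f T :
  edge_label f (tri_edge T 0) + edge_label f (tri_edge T 1) + edge_label f (tri_edge T 2) = 0.
Proof. by case: T => [[u p q]]; case: u => /=; ring. Qed.

(* [slack f p q j] is the slack of the rhombus inequality for the rhombus made of
   [Down p q] and its neighbour [across (false, p, q) j]. *)
Definition slack (f : labelling R) (p q j : nat) : R :=
  match j with
  | 0%N => f p q.+1 + f p.+1 q.+1 - (f p.+1 q + f p q.+2)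
  | 1%N => f p.+1 q + f p.+1 q.+1 - (f p q.+1 + f p.+2 q)
  | _ => f p.+1 q + f p q.+1 - (f p q + f p.+1 q.+1)
  end.

Definition flat_rhombus (f : labelling R) (p q j : nat) : bool :=
  [&& (p + q + 2 <= n)%N, (j < 3)%N & slack f p q j == 0].

Definition rhombus_down (T : tri) (k : nat) : nat * nat :=
  let D := if is_up T then across T k else T in (D.1.2, D.2).

Definition flat_across (f : labelling R) (T : tri) (k : nat) : bool :=
  off_axes (tri_edge T k) && flat_rhombus f (rhombus_down T k).1 (rhombus_down T k).2 k.

Lemma flat_across_kind f T k : flat_across f T k -> (k < 3)%N.
Proof. by case/andP=> _ /and3P[]. Qed.

Lemma flat_across_sym f T k : flat_across f T k -> flat_across f (across T k) k.
Proof.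
move=> H; have k3 := flat_across_kind H; move: H.
case: T => [[u p q]]; case: u; case: k k3 => [|[|[|k]]] //= _;
  try (case: q => [|q]); try (case: p => [|p]) => //=.
Qed.

Lemma flat_across_valid f T k : flat_across f T k -> valid_tri n T /\ valid_tri n (across T k).
Proof.
move=> H; have k3 := flat_across_kind H; move: H.
case: T => [[u p q]]; case: u; case: k k3 => [|[|[|k]]] //= _;
  try (case: q => [|q]); try (case: p => [|p]) => //= /andP[_ /and3P[B _ _]];
  move: B; rewrite /rhombus_down /=; lia.
Qed.

Lemma flat_across_label f T j k : flat_across f T j -> (k < 3)%N -> k != j ->
  edge_label f (tri_edge (across T j) k) = edge_label f (tri_edge T k).
Proof.
move=> H; have j3 := flat_across_kind H; move: H.
case: T => [[u p q]]; case: u; case: j j3 => [|[|[|j]]] //= _;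
  try (case: q => [|q]); try (case: p => [|p]) => //= /andP[_ /and3P[_ _ /eqP E]];
  case: k => [|[|[|k]]] //= _ _; rewrite /rhombus_down /slack /= in E; lra.
Qed.

Lemma flat_rhombus_of_label f p q j k : (p + q + 2 <= n)%N -> (j < 3)%N -> (k < 3)%N ->
  k != j ->
  edge_label f (tri_edge (across (false, p, q) j) k) = edge_label f (tri_edge (false, p, q) k) ->
  flat_rhombus f p q j.
Proof.
move=> B; case: j => [|[|[|j]]] //= _; case: k => [|[|[|k]]] //= _ _ E;
  rewrite /flat_rhombus B /slack /=; apply/eqP; lra.
Qed.

Lemma is_hive_slack f :
  is_hive n f <-> forall p q j, (p + q + 2 <= n)%N -> (j < 3)%N -> 0 <= slack f p q j.
Proof.
split=> [H p q j B | H p q B].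
  by have [H1 H2 H3] := H p q B; case: j => [|[|[|j]]] //= _; rewrite subr_ge0.
by split; rewrite -subr_ge0; [exact: (H p q 2%N) | exact: (H p q 1%N) | exact: (H p q 0%N)].
Qed.

End Labels.

Section FlatspacesSmall.
Variables (R : realFieldType) (n : nat) (h : labelling R).
Hypothesis small : flatspaces_small n h.

Lemma flat_step_across_down p q j : flat_across n h (false, p, q) j ->
  flat_step n h (to_small (false, p, q)) (to_small (across (false, p, q) j)).
Proof.
move=> H; have j3 := flat_across_kind H; move: H.
rewrite /flat_across /rhombus_down /= => /andP[_ /and3P[B _ /eqP]].
by case: j j3 => [|[|[|j]]] //= _ /eqP; rewrite subr_eq0 => /eqP E;
  [apply: flat3 | apply: flat2 | apply: flat1].
Qed.

Lemma same_flatspace_across T j : flat_across n h T j ->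
  same_flatspace n h (to_small T) (to_small (across T j)).
Proof.
move=> H; have j3 := flat_across_kind H.
case: T H => [[[] p q]] H; last by apply: rst_step; apply: flat_step_across_down.
set D := across (true, p, q) j.
have K : across D j = (true, p, q) := acrossK j3 (proj1 (andP H)).
have HD : flat_across n h D j := flat_across_sym H.
have : is_up D = false by rewrite is_up_across.
move: D K HD => [[[] p' q']] // K HD _.
by apply: rst_sym; rewrite -K; apply: rst_step; apply: flat_step_across_down.
Qed.

Lemma flat_across_uniq T j j' : valid_tri n T ->
  flat_across n h T j -> flat_across n h T j' -> j = j'.
Proof.
move=> V H H'.
have [_ V1] := flat_across_valid H; have [_ V2] := flat_across_valid H'.
have ne k : to_small (across T k) <> to_small T.
  by move/to_small_inj/eqP; rewrite (negbTE (across_neq T k)).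
case: (small (valid_to_small V) (valid_to_small V1) (valid_to_small V2)
  (same_flatspace_across H) (same_flatspace_across H')) => [/ne|[/ne|/to_small_inj E]] //.
exact: across_inj (flat_across_kind H) (flat_across_kind H') (proj1 (andP H)) (proj1 (andP H')) E.
Qed.

End FlatspacesSmall.

Section VertexRigidity.
Variables (R : realFieldType) (n : nat).
Local Open Scope ring_scope.

Lemma exists_eps_below (I : eqType) (s : seq I) (S G : I -> R) :
  (forall i, 0 <= S i) -> (forall i, S i = 0 -> G i = 0) ->
  exists2 e : R, 0 < e & forall i, i \in s -> e * `|G i| <= S i.
Proof.
move=> S_ge0 SG; elim: s => [|i s [e e0 le_e]]; first by exists 1.
have [Si0|Si_neq0] := eqVneq (S i) 0.
  exists e => // j; rewrite inE => /orP[/eqP ->|/le_e //].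
  by rewrite SG // normr0 mulr0 Si0.
have Si_gt0 : 0 < S i by rewrite lt_def Si_neq0 S_ge0.
have d_gt0 : 0 < `|G i| + 1 by rewrite ltr_wpDl.
exists (Num.min e (S i / (`|G i| + 1))); first by rewrite lt_min e0 divr_gt0.
move=> j; rewrite inE => /orP[/eqP ->|/le_e le_j]; last first.
  by apply: le_trans le_j; rewrite ler_wpM2r // ge_min lexx.
apply: le_trans (_ : S i / (`|G i| + 1) * `|G i| <= S i).
  by rewrite ler_wpM2r // ge_min lexx orbT.
by rewrite mulrAC ler_pdivrMr // ler_wpM2l // lerDl.
Qed.

Lemma is_hive_shift (f g : labelling R) (e : R) : 0 <= e ->
  (forall p q j, (p + q + 2 <= n)%N -> (j < 3)%N -> e * `|slack g p q j| <= slack f p q j) ->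
  is_hive n (fun p q => f p q + e * g p q) /\ is_hive n (fun p q => f p q - e * g p q).
Proof.
move=> e_ge0 le_slack.
have slackD p q j : slack (fun p q => f p q + e * g p q) p q j = slack f p q j + e * slack g p q j.
  by case: j => [|[|[|j]]] /=; ring.
have slackB p q j : slack (fun p q => f p q - e * g p q) p q j = slack f p q j - e * slack g p q j.
  by case: j => [|[|[|j]]] /=; ring.
have le_norm (x : R) : e * x <= e * `|x| /\ - (e * x) <= e * `|x|.
  by rewrite -mulrN !ler_wpM2l // ?ler_norm // -normrN ler_norm.
split; apply/is_hive_slack => p q j B j3;
  have := le_slack p q j B j3; have [] := le_norm (slack g p q j).
- by rewrite slackD; lra.
- by rewrite slackB; lra.
Qed.

Lemma hive_slack_eps (f g : labelling R) : is_hive n f ->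
  (forall p q j, flat_rhombus n f p q j -> flat_rhombus n g p q j) ->
  exists2 e : R, 0 < e &
    forall p q j, (p + q + 2 <= n)%N -> (j < 3)%N -> e * `|slack g p q j| <= slack f p q j.
Proof.
move=> hive_f g_flat.
pose restrict (F : nat -> nat -> nat -> R) (i : 'I_n.+1 * 'I_n.+1 * 'I_3) :=
  if (i.1.1 + i.1.2 + 2 <= n)%N then F i.1.1 i.1.2 i.2 else 0.
have [e e0 le_e] : exists2 e : R, 0 < e &
    forall i, i \in enum predT -> e * `|restrict (slack g) i| <= restrict (slack f) i.
  apply: exists_eps_below => [[[p q] j]|[[p q] j]]; rewrite /restrict /=; case: ifP => // B.
    exact: (proj1 (is_hive_slack n f) hive_f).
  move/eqP; have := g_flat p q j; rewrite /flat_rhombus B ltn_ord.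
  by move=> /[apply] /eqP.
exists e => // p q j B j3.
have [p_lt q_lt] : (p < n.+1)%N /\ (q < n.+1)%N by lia.
by have := le_e (Ordinal p_lt, Ordinal q_lt, Ordinal j3); rewrite mem_enum /restrict /= B; apply.
Qed.

Lemma hive_vertex_rigid (h g : labelling R) : hive_vertex n h ->
  (forall p q, in_B n p q -> g p q = 0) ->
  (forall p q j, flat_rhombus n h p q j -> flat_rhombus n g p q j) ->
  forall p q, in_H n p q -> g p q = 0.
Proof.
move=> [hive_h vertex_h] g_border g_flat p q Hpq.
have [e e_gt0 le_slack] := hive_slack_eps hive_h g_flat.
have [hive1 hive2] := is_hive_shift (ltW e_gt0) le_slack.
have border1 : same_border n h (fun p q => h p q + e * g p q).
  by move=> a b B; rewrite g_border // mulr0 addr0.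
have border2 : same_border n h (fun p q => h p q - e * g p q).
  by move=> a b B; rewrite g_border // mulr0 subr0.
have half_gt0 : (0 : R) < 1 / 2 by rewrite divr_gt0.
have half_lt1 : (1 / 2 : R) < 1 by rewrite ltr_pdivrMr // mul1r ltr1n.
have /= : h p q + e * g p q = h p q - e * g p q.
  apply: vertex_h hive1 border1 hive2 border2 half_gt0 half_lt1 _ _ _ Hpq => a b _.
  by field.
move=> E; have /eqP : e * g p q = 0 by lra.
by rewrite mulf_eq0 (gt_eqF e_gt0) => /eqP.
Qed.

End VertexRigidity.

Section Potential.
Variables (R : realFieldType) (n : nat) (F : edge -> R).
Local Open Scope ring_scope.
Hypothesis F_tri : forall T, valid_tri n T ->
  F (tri_edge T 0) + F (tri_edge T 1) + F (tri_edge T 2) = 0.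
Hypothesis F_border : forall e, valid_edge n e -> border_edge n e -> F e = 0.

Definition potential : labelling R := fun p q => \sum_(i < p) F (0%N, i : nat, q).

Lemma potential0 q : potential 0 q = 0.
Proof. by rewrite /potential big_ord0. Qed.

Lemma potentialS p q : potential p.+1 q = potential p q + F (0%N, p, q).
Proof. by rewrite /potential big_ord_recr. Qed.

Lemma potential_edge1 p q : (p + q + 1 <= n)%N -> potential p q - potential p q.+1 = F (1%N, p, q).
Proof.
elim: p => [|p IH] B; first by rewrite !potential0 subrr F_border //=; lia.
have /= up := F_tri (T := (true, p, q)) ltac:(rewrite /=; lia).
have /= down := F_tri (T := (false, p, q)) ltac:(rewrite /=; lia).
have := IH ltac:(lia); rewrite !potentialS; lra.
Qed.

Lemma potential_edge2 p q : (p + q + 1 <= n)%N ->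
  potential p q.+1 - potential p.+1 q = F (2%N, p, q).
Proof.
move=> B; have /= up := F_tri (T := (true, p, q)) ltac:(rewrite /=; lia).
have := potential_edge1 B; rewrite potentialS; lra.
Qed.

Lemma edge_label_potential T k : valid_tri n T -> (k < 3)%N ->
  edge_label potential (tri_edge T k) = F (tri_edge T k).
Proof.
case: T => [[[] p q]] /= V; case: k => [|[|[|k]]] //= _;
  first [by rewrite potentialS; ring | rewrite potential_edge1 // | rewrite potential_edge2 //];
  lia.
Qed.

Lemma potential_border p q : in_B n p q -> potential p q = 0.
Proof.
rewrite /in_B /in_H => /andP[B /orP[/eqP ->|/orP[/eqP ->|/eqP E]]].
- exact: potential0.
- by rewrite /potential big1 // => i _; apply: F_border => //=; have := ltn_ord i; lia.
elim: p q B E => [|p IH] q B E; first exact: potential0.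
have := @potential_edge2 p q ltac:(lia).
rewrite F_border /= ?IH; [lra | lia | lia | lia | apply/eqP; lia].
Qed.

End Potential.

Section Walk.
Variables (R : realFieldType) (n : nat) (h : labelling R) (good : R -> Prop).
Local Open Scope ring_scope.
Hypothesis goodD : forall x y, good x -> good y -> good (x + y).
Hypothesis goodN : forall x, good x -> good (- x).
Hypothesis good_border : forall p q, in_B n p q -> good (h p q).
Hypothesis small : flatspaces_small n h.

Lemma goodB x y : good x -> good y -> good (x - y).
Proof. by move=> Gx Gy; apply: goodD => //; apply: goodN. Qed.

Lemma good_border_edge e : valid_edge n e -> border_edge n e -> good (edge_label h e).
Proof.
case: e => [[k a b]]; case: k => [|[|[|k]]] //= B /eqP E; subst;
  apply: goodB; apply: good_border; rewrite /in_B /in_H; apply/andP; split;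
  rewrite ?eqxx ?orbT //; lia.
Qed.

Lemma bad_edge_off_axes e : valid_edge n e -> ~ good (edge_label h e) ->
  off_axes e /\ ~~ border_edge n e.
Proof.
move=> V bad; have nb : ~~ border_edge n e by apply/negP => /(good_border_edge V).
by split => //; exact: nonborder_off_axes V nb.
Qed.

Lemma good_sum0 x y z : x + y + z = 0 -> good x -> good y -> good z.
Proof. by move=> sum0 Gx Gy; rewrite (_ : z = - (x + y)); [apply/goodN/goodD | lra]. Qed.

Lemma other_bad_edge T k : (k < 3)%N -> ~ good (edge_label h (tri_edge T k)) ->
  exists k', [/\ (k' < 3)%N, k' != k & ~ good (edge_label h (tri_edge T k'))].
Proof.
move=> k3 bad; apply: NNPP => all_good; apply: bad.
have G k' : (k' < 3)%N -> k' != k -> good (edge_label h (tri_edge T k')).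
  by move=> k'3 ne; apply: NNPP => bad'; apply: all_good; exists k'.
have := edge_label_tri h T.
case: k k3 G {all_good} => [|[|[|k]]] //= _ G sum0.
- by apply: (good_sum0 _ (G 1%N isT isT) (G 2%N isT isT)); lra.
- by apply: (good_sum0 _ (G 0%N isT isT) (G 2%N isT isT)); lra.
- by apply: (good_sum0 _ (G 0%N isT isT) (G 1%N isT isT)); lra.
Qed.

(* The state (T, k) records that the walk has just entered T through its side k,
   coming from [across T k]. *)
Definition walk_state (s : tri * nat) : Prop :=
  [/\ (s.2 < 3)%N, valid_tri n s.1, ~ good (edge_label h (tri_edge s.1 s.2))
    & ~~ flat_across n h s.1 s.2].

Lemma walk_state_off_axes s : walk_state s -> off_axes (tri_edge s.1 s.2).
Proof. by case=> k3 V bad _; have [] := bad_edge_off_axes (valid_tri_edge V k3) bad. Qed.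

(* Either T forms a flat rhombus with [across T j] and the walk leaves that rhombus
   through the side parallel to k, or T is its own flatspace and the walk leaves
   it through another side. *)
Definition walk_step (s s' : tri * nat) : Prop :=
  (exists j, [/\ (j < 3)%N, flat_across n h s.1 j, j != s.2, s'.2 = s.2 &
      s'.1 = across (across s.1 j) s.2 /\ off_axes (tri_edge (across s.1 j) s.2)])
  \/ ((forall j, (j < 3)%N -> ~~ flat_across n h s.1 j) /\
      [/\ s'.2 != s.2, (s'.2 < 3)%N, s'.1 = across s.1 s'.2 & off_axes (tri_edge s.1 s'.2)]).

Lemma walk_state_across T k : valid_tri n T -> (k < 3)%N ->
  ~ good (edge_label h (tri_edge T k)) -> ~~ flat_across n h T k -> walk_state (across T k, k).
Proof.
move=> V k3 bad nflat.
have [off nb] := bad_edge_off_axes (valid_tri_edge V k3) bad.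
have K := acrossK k3 off; have KE := tri_edge_across k3 off.
split => //=; rewrite ?KE //; first exact: valid_across.
by apply: contra nflat => /flat_across_sym; rewrite K.
Qed.

Lemma bad_edge_walk_state T k : valid_tri n T -> (k < 3)%N ->
  ~ good (edge_label h (tri_edge T k)) -> exists s, walk_state s.
Proof.
move=> V k3 bad; case: (boolP (flat_across n h T k)) => [flat|nflat]; last first.
  by exists (across T k, k); apply: walk_state_across.
have [k' [k'3 k'k bad']] := other_bad_edge k3 bad.
exists (across T k', k'); apply: walk_state_across => //.
by apply: contra k'k => flat'; rewrite (flat_across_uniq small V flat' flat).
Qed.

Lemma walk_step_exists s : walk_state s -> exists2 s', walk_step s s' & walk_state s'.
Proof.
case: s => T k [/= k3 V bad nflat].
case: (classic (exists j, (j < 3)%N /\ flat_across n h T j)) => [[j [j3 flat]]|noflat].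
  have jk : j != k by apply: contraNneq nflat => <-.
  have [_ VP] := flat_across_valid flat.
  have bad' : ~ good (edge_label h (tri_edge (across T j) k)).
    by rewrite (flat_across_label flat k3); first exact: bad; rewrite eq_sym.
  have [off' _] := bad_edge_off_axes (valid_tri_edge VP k3) bad'.
  exists (across (across T j) k, k); first by left; exists j.
  apply: walk_state_across => //; apply: contraNN jk => flat'.
  by rewrite (flat_across_uniq small VP (flat_across_sym flat) flat').
have nflat' j : (j < 3)%N -> ~~ flat_across n h T j.
  by move=> j3; apply/negP => flat; apply: noflat; exists j.
have [k' [k'3 k'k bad']] := other_bad_edge k3 bad.
have [off' _] := bad_edge_off_axes (valid_tri_edge V k'3) bad'.
exists (across T k', k'); first by right.
by apply: walk_state_across => //; apply: nflat'.
Qed.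

Lemma infinite_walk s0 : walk_state s0 -> exists w : nat -> tri * nat,
  (forall t, walk_state (w t)) /\ (forall t, walk_step (w t) (w t.+1)).
Proof.
move=> state0.
have next s : exists s', walk_state s -> walk_step s s' /\ walk_state s'.
  case: (classic (walk_state s)) => [/walk_step_exists [s' ? ?]|]; last by exists s.
  by exists s'.
have [succ Hsucc] := choice _ next.
pose w t := iter t succ s0.
have state_w t : walk_state (w t) by elim: t => //= t IH; exact: (Hsucc _ IH).2.
by exists w; split => // t; exact: (Hsucc _ (state_w t)).1.
Qed.

Definition tri_sign (T : tri) : R := if is_up T then 1 else -1.

Lemma crossing_tri_sides (s : tri * nat) (T : tri) :
  (s.2 < 3)%N -> off_axes (tri_edge s.1 s.2) ->
  (if tri_edge s.1 s.2 == tri_edge T 0 then tri_sign s.1 else 0)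
  + (if tri_edge s.1 s.2 == tri_edge T 1 then tri_sign s.1 else 0)
  + (if tri_edge s.1 s.2 == tri_edge T 2 then tri_sign s.1 else 0)
  = tri_sign T * ((s.1 == T)%:R - (across s.1 s.2 == T)%:R).
Proof.
case: s => X k /= k3 off.
have kind k' : (tri_edge X k == tri_edge T k') = (k' == k)%N && (tri_edge X k == tri_edge T k).
  case: (eqVneq k' k) => [-> //|k'k]; apply: contraNF k'k => /eqP E.
  by have := congr1 (fun e : edge => e.1.1) E; rewrite /= !tri_edge_kind => ->.
have sides : (tri_edge X k == tri_edge T k) = (X == T) || (across X k == T).
  apply/eqP/orP => [/(tri_edge_inj k3 k3) [_ [->|->]]|]; rewrite ?eqxx ?orbT; [by left|by right|].
  by case=> /eqP <-; rewrite ?tri_edge_across.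
rewrite (kind 0%N) (kind 1%N) (kind 2%N) sides.
have -> : forall b (x : R), (if (0 == k)%N && b then x else 0) + (if (1 == k)%N && b then x else 0)
  + (if (2 == k)%N && b then x else 0) = if b then x else 0.
  by move=> b x; case: k k3 {kind sides off} => [|[|[|k]]] //= _; case: b; rewrite ?addr0 ?add0r.
case: (eqVneq X T) => [<-|XT] /=; first by rewrite (negbTE (across_neq X k)) subr0 mulr1.
case: (eqVneq (across X k) T) => [<-|_] /=; last by rewrite subrr mulr0.
by rewrite /tri_sign is_up_across; case: (is_up X); rewrite /= sub0r ?mulrN1 ?mulN1r ?opprK.
Qed.

Section ClosedWalk.
Variables (c : nat -> tri * nat) (m : nat).
Hypothesis m_gt0 : (0 < m)%N.
Hypothesis c_state : forall t, walk_state (c t).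
Hypothesis c_step : forall t, walk_step (c t) (c t.+1).
Hypothesis c_closed : c m = c 0.
(* The first edge is crossed only once, so its crossings cannot cancel. *)
Hypothesis c_first : forall t, (0 < t < m)%N ->
  tri_edge (c t).1 (c t).2 != tri_edge (c 0).1 (c 0).2.

Definition crossings (E : edge) : R :=
  \sum_(t < m) (if tri_edge (c t).1 (c t).2 == E then tri_sign (c t).1 else 0).

Lemma sum_closed_walk_shift (phi : tri * nat -> R) :
  \sum_(t < m) phi (c t.+1) = \sum_(t < m) phi (c t).
Proof.
have Em : m = m.-1.+1 by rewrite prednK.
rewrite [in LHS]Em [in RHS]Em big_ord_recr big_ord_recl /= -Em c_closed addrC.
by congr (_ + _); apply: eq_bigr => i _.
Qed.

Lemma walk_source_nonflat t T : (forall j, (j < 3)%N -> ~~ flat_across n h T j) ->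
  (across (c t.+1).1 (c t.+1).2 == T) = ((c t).1 == T).
Proof.
move=> nflat; have [k3 _ _ _] := c_state t.
case: (c_step t) => [[j [j3 flat jk E2 [E1 off]]]|[_ [_ k'3 E1 off]]]; last first.
  by rewrite E1 acrossK.
rewrite E1 E2 (acrossK k3 off).
case: (eqVneq (across (c t).1 j) T) => [E|_].
  by have := flat_across_sym flat; rewrite E (negbTE (nflat j j3)).
by case: (eqVneq (c t).1 T) => // E; move: flat; rewrite E (negbTE (nflat j j3)).
Qed.

Lemma crossings_tri_nonflat T : (forall j, (j < 3)%N -> ~~ flat_across n h T j) ->
  crossings (tri_edge T 0) + crossings (tri_edge T 1) + crossings (tri_edge T 2) = 0.
Proof.
move=> nflat; rewrite /crossings -!big_split /=.
rewrite (eq_bigr (fun t : 'I_m =>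
  tri_sign T * (((c t).1 == T)%:R - (across (c t).1 (c t).2 == T)%:R))); last first.
  move=> t _; have [k3 _ _ _] := c_state t.
  exact: crossing_tri_sides (walk_state_off_axes (c_state t)).
rewrite -mulr_sumr sumrB.
have -> : \sum_(t < m) ((across (c t).1 (c t).2 == T)%:R : R)
          = \sum_(t < m) (((c t).1 == T)%:R : R).
  rewrite -(sum_closed_walk_shift (fun s => ((across s.1 s.2 == T)%:R : R))).
  by apply: eq_bigr => t _; rewrite walk_source_nonflat.
by rewrite subrr mulr0.
Qed.

Lemma crossings_good E : good (edge_label h E) -> crossings E = 0.
Proof.
move=> G; rewrite /crossings big1 // => t _.
by case: eqP => // Et; have [_ _ bad _] := c_state t; case: bad; rewrite Et.
Qed.

Lemma crossings_side T k : (k < 3)%N -> off_axes (tri_edge T k) ->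
  crossings (tri_edge T k) = tri_sign T * (\sum_(t < m) ((c t == (T, k))%:R : R)
                                          - \sum_(t < m) ((c t == (across T k, k))%:R : R)).
Proof.
move=> k3 off; rewrite -sumrB mulr_sumr /crossings; apply: eq_bigr => t _.
have [k03 _ _ _] := c_state t; have off0 := walk_state_off_axes (c_state t).
case: (c t) k03 off0 => X k0 /= k03 off0.
case: (eqVneq (X, k0) (T, k)) => [[-> ->]|ne1].
  by rewrite eqxx xpair_eqE eq_sym (negbTE (across_neq T k)) /= subr0 mulr1.
case: (eqVneq (X, k0) (across T k, k)) => [[-> ->]|ne2].
  rewrite tri_edge_across // eqxx /tri_sign is_up_across.
  by case: (is_up T); rewrite /= sub0r ?mulrN1 ?opprK.
rewrite subrr mulr0; case: eqP => // /(tri_edge_inj k03 k3) [Ek [ET|ET]]; subst k0.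
  by rewrite ET eqxx in ne1.
by rewrite ET acrossK ?eqxx in ne2.
Qed.

(* Through a flat rhombus the walk goes straight: it enters T by side k exactly when,
   one step later, it enters the triangle beyond the opposite side of the rhombus. *)
Lemma walk_through_rhombus T j k t : valid_tri n T -> flat_across n h T j -> (k < 3)%N ->
  k != j -> off_axes (tri_edge (across T j) k) ->
  (c t == (T, k)) = (c t.+1 == (across (across T j) k, k)).
Proof.
move=> V flat k3 kj offP.
have j3 := flat_across_kind flat; have [_ VP] := flat_across_valid flat.
have KT := acrossK j3 (proj1 (andP flat)); have KP := acrossK k3 offP.
case: (c_step t) => [[j' [j'3 flat' _ E2 [E1 off']]]|[nflat [_ k'3 E1 off']]].
- apply/eqP/eqP => [Ect|Ect]; rewrite Ect /= in flat' E1 E2 off'.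
    have ej : j' = j := flat_across_uniq small V flat' flat.
    by subst j'; case: (c t.+1) E1 E2 => X' k' /= -> ->.
  rewrite -E2 in E1 off'.
  have EP : across (c t).1 j' = across T j by rewrite -(acrossK k3 off') -E1 KP.
  have ej : j' = j.
    apply: (flat_across_uniq small VP _ (flat_across_sym flat)).
    by rewrite -EP; apply: flat_across_sym.
  subst j'; have KX := acrossK j3 (proj1 (andP flat')).
  by case: (c t) KX EP E2 => X k0 /= KX EP ->; rewrite -KX EP KT.
- apply/eqP/eqP => [Ect|Ect]; rewrite Ect /= in nflat E1 off'.
    by move: (nflat j j3); rewrite flat.
  have EX : (c t).1 = across T j by rewrite -(acrossK k3 off') -E1 KP.
  by move: (nflat j j3); rewrite EX (flat_across_sym flat).
Qed.

Lemma crossings_rhombus T j k : valid_tri n T -> flat_across n h T j -> (k < 3)%N -> k != j ->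
  crossings (tri_edge (across T j) k) = crossings (tri_edge T k).
Proof.
move=> V flat k3 kj.
have label_eq := flat_across_label flat k3 kj.
case: (classic (good (edge_label h (tri_edge T k)))) => G.
  by rewrite !crossings_good ?label_eq.
have j3 := flat_across_kind flat; have [_ VP] := flat_across_valid flat.
have [off _] := bad_edge_off_axes (valid_tri_edge V k3) G.
have [offP _] : off_axes (tri_edge (across T j) k) /\ ~~ border_edge n (tri_edge (across T j) k).
  by apply: bad_edge_off_axes (valid_tri_edge VP k3) _; rewrite label_eq.
have KT := acrossK j3 (proj1 (andP flat)).
have enter_T : \sum_(t < m) ((c t == (T, k))%:R : R)
             = \sum_(t < m) ((c t == (across (across T j) k, k))%:R : R).
  rewrite -(sum_closed_walk_shift (fun s => ((s == (across (across T j) k, k))%:R : R))).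
  by apply: eq_bigr => t _; rewrite (walk_through_rhombus t V flat k3 kj offP).
have enter_P : \sum_(t < m) ((c t == (across T j, k))%:R : R)
             = \sum_(t < m) ((c t == (across T k, k))%:R : R).
  rewrite -(sum_closed_walk_shift (fun s => ((s == (across T k, k))%:R : R))).
  apply: eq_bigr => t _; have offT : off_axes (tri_edge (across (across T j) j) k) by rewrite KT.
  by rewrite (walk_through_rhombus t VP (flat_across_sym flat) k3 kj offT) KT.
rewrite !crossings_side // enter_T enter_P /tri_sign is_up_across; case: (is_up T) => /=; ring.
Qed.

Lemma crossings_first : crossings (tri_edge (c 0).1 (c 0).2) = tri_sign (c 0).1.
Proof.
rewrite /crossings (bigD1 (Ordinal m_gt0)) //= eqxx big1 ?addr0 // => i ne.
rewrite ifF //; apply: negbTE; apply: c_first; rewrite ltn_ord andbT lt0n.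
by apply: contra ne => /eqP E; apply/eqP; apply: val_inj.
Qed.

(* (true, E.1.2, E.2) is the up triangle having E as a side. The walk never crosses
   the diagonal of a flat rhombus; there the flow is chosen to balance that triangle. *)
Definition flow (E : edge) : R :=
  if flat_across n h (true, E.1.2, E.2) E.1.1 then
    crossings E - (crossings (tri_edge (true, E.1.2, E.2) 0)
                   + crossings (tri_edge (true, E.1.2, E.2) 1)
                   + crossings (tri_edge (true, E.1.2, E.2) 2))
  else crossings E.

Lemma flow_nonflat T k : (k < 3)%N -> ~~ flat_across n h T k ->
  flow (tri_edge T k) = crossings (tri_edge T k).
Proof.
move=> k3 nflat; rewrite /flow; case: T nflat => [[[] p q]] nflat.
  by rewrite /= (negbTE nflat).
have down_up : (true, (tri_edge (false, p, q) k).1.2, (tri_edge (false, p, q) k).2)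
               = across (false, p, q) k by case: k k3 {nflat} => [|[|[|k]]].
have off : off_axes (tri_edge (false, p, q) k) by case: k k3 {nflat down_up} => [|[|[|k]]].
rewrite down_up tri_edge_kind ifF //; apply: contraNF nflat => /flat_across_sym.
by rewrite acrossK.
Qed.

Lemma flow_tri T : valid_tri n T ->
  flow (tri_edge T 0) + flow (tri_edge T 1) + flow (tri_edge T 2) = 0.
Proof.
move=> V; case: (classic (exists j, (j < 3)%N /\ flat_across n h T j)) => [[j [j3 flat]]|noflat];
  last first.
  have nflat k : (k < 3)%N -> ~~ flat_across n h T k.
    by move=> k3; apply/negP => flat; apply: noflat; exists k.
  by rewrite !flow_nonflat ?nflat //; apply: crossings_tri_nonflat.
have nflat k : (k < 3)%N -> k != j -> ~~ flat_across n h T k.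
  by move=> k3; apply: contraNN => flat'; rewrite (flat_across_uniq small V flat' flat).
case: T V flat nflat => [[[] p q]] V flat nflat.
  rewrite /flow /=; case: j j3 flat nflat => [|[|[|j]]] //= _ flat nflat;
    rewrite flat ?(negbTE (nflat 0%N _ _)) ?(negbTE (nflat 1%N _ _)) ?(negbTE (nflat 2%N _ _)) //;
    ring.
set D := (false, p, q) in V flat nflat *.
have flow_j : flow (tri_edge D j) = crossings (tri_edge D j) -
    (crossings (tri_edge (across D j) 0) + crossings (tri_edge (across D j) 1)
     + crossings (tri_edge (across D j) 2)).
  have down_up : (true, (tri_edge D j).1.2, (tri_edge D j).2) = across D j
    by case: j j3 {flat nflat} => [|[|[|j]]].
  by rewrite /flow down_up tri_edge_kind (flat_across_sym flat).
have flow_k k : (k < 3)%N -> k != j -> flow (tri_edge D k) = crossings (tri_edge (across D j) k).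
  by move=> k3 kj; rewrite flow_nonflat ?nflat // (crossings_rhombus V flat k3 kj).
have KE := tri_edge_across j3 (proj1 (andP flat)).
by case: j j3 flat nflat flow_j flow_k KE => [|[|[|j]]] // _ _ _ -> flow_k KE;
  rewrite ?flow_k // KE; ring.
Qed.

Lemma flow_border e : valid_edge n e -> border_edge n e -> flow e = 0.
Proof.
move=> V B; have nflat : flat_across n h (true, e.1.2, e.2) e.1.1 = false.
  move: V B; case: e => [[k a b]] /=; rewrite /flat_across /flat_rhombus /rhombus_down /=.
  case: k => [|[|[|k]]] //= _ /eqP E; subst; rewrite ?andbF //.
  by have -> : (a + b + 2 <= n)%N = false by lia.
by rewrite /flow nflat; apply: crossings_good; apply: good_border_edge.
Qed.

Lemma potential_flow_flat p q j :
  flat_rhombus n h p q j -> flat_rhombus n (potential flow) p q j.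
Proof.
move=> flatD; have /and3P[_ j3 _] := flatD; set D := (false, p, q).
have flat : flat_across n h D j.
  by rewrite /flat_across /rhombus_down /= flatD; case: j j3 {flatD} => [|[|[|j]]].
have [VD VP] := flat_across_valid flat.
have [k [k3 kj]] : exists k, (k < 3)%N /\ k != j.
  by case: (j) j3 => [|[|[|]]] // _; [exists 1%N | exists 0%N | exists 0%N].
apply: (flat_rhombus_of_label VD j3 k3 kj).
have nflatD : ~~ flat_across n h D k.
  by apply: contraNN kj => flat'; rewrite (flat_across_uniq small VD flat' flat).
have nflatP : ~~ flat_across n h (across D j) k.
  by apply: contraNN kj => flat'; rewrite (flat_across_uniq small VP flat' (flat_across_sym flat)).
rewrite !(edge_label_potential flow_tri flow_border) // !flow_nonflat //.
exact: crossings_rhombus VD flat k3 kj.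
Qed.

Lemma closed_walk_not_vertex : ~ hive_vertex n h.
Proof.
move=> vertex.
have g0 := hive_vertex_rigid vertex (potential_border flow_tri flow_border) potential_flow_flat.
have [k3 V _ nflat] := c_state 0.
have := edge_label_potential flow_tri flow_border V k3.
rewrite flow_nonflat // crossings_first.
have -> : edge_label (potential flow) (tri_edge (c 0).1 (c 0).2) = 0.
  move: (valid_tri_edge V k3); case: (tri_edge _ _) => [[k a b]] /= /andP[_ B].
  by case: k => [|[|k]] /=; rewrite !g0 ?subrr // /in_H; lia.
by rewrite /tri_sign; case: (is_up _) => /eqP; rewrite eq_sym ?oppr_eq0 oner_eq0.
Qed.

End ClosedWalk.

Lemma walk_step_no_return s : walk_state s -> ~ walk_step s (across s.1 s.2, s.2).
Proof.
case: s => T k state; have off := walk_state_off_axes state; case: state => /= k3 _ _ _.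
case=> [[j [_ _ _ _ [/= E1 off']]]|[_ [/= ne _ _ _]]]; last by rewrite eqxx in ne.
have := congr1 (across^~ k) E1; rewrite (acrossK k3 off) (acrossK k3 off') => ET.
by have := across_neq T j; rewrite -ET eqxx.
Qed.

(* s entered T, the walk went on to s1, and s2 steps back over the edge by which s
   entered T: then s2 may step directly to s1 instead. *)
Lemma walk_step_shortcut s s1 s2 : walk_state s -> walk_state s2 ->
  walk_step s s1 -> walk_step s2 (across s.1 s.2, s.2) ->
  (tri_edge s1.1 s1.2 = tri_edge s2.1 s2.2 -> s1 = s2) -> walk_step s2 s1.
Proof.
case: s s1 s2 => T k [T1 k1] [X k2] state state2 step1 step2 same.
have off := walk_state_off_axes state; have off2 := walk_state_off_axes state2.
case: state state2 => /= k3 V _ _ [/= k23 _ _ _]; have K := acrossK k3 off.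
case: step2 => [[j [j3 flat _ /= Ek [/= E1 off']]]|[nflatX [/= ne _ E1 off']]].
- exfalso; subst k2.
  have ET : T = across X j by have := congr1 (across^~ k) E1; rewrite K (acrossK k3 off').
  have flatT : flat_across n h T j by rewrite ET; apply: flat_across_sym.
  have KX : across T j = X by rewrite ET (acrossK j3 (proj1 (andP flat))).
  case: step1 => [[j' [_ flat' _ /= Ek1 [/= E1' _]]]|[nflatT _]]; last first.
    by move: (nflatT j j3); rewrite flatT.
  rewrite (flat_across_uniq small V flat' flatT) KX in E1'; subst T1 k1.
  have /same [] : tri_edge (across X k) k = tri_edge X k by rewrite tri_edge_across.
  by apply/eqP; rewrite across_neq.
- have EX : T = X by have := congr1 (across^~ k) E1; rewrite K (acrossK k3 off').
  subst X; case: step1 => [[j [j3 flat _ _ _]]|[_ [/= ne1 k13 E1' off1]]].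
    by move: (nflatX j j3); rewrite flat.
  right; split=> //; split=> //=; apply: contraNneq (across_neq T k1) => E12.
  by have := same; rewrite /= E1' tri_edge_across // E12 => /(_ erefl) [] /eqP.
Qed.

Section InfiniteWalk.
Variable w : nat -> tri * nat.
Hypothesis w_state : forall t, walk_state (w t).
Hypothesis w_step : forall t, walk_step (w t) (w t.+1).
Local Notation E t := (tri_edge (w t).1 (w t).2).

Lemma closed_walk_from st m : (0 < m)%N -> walk_step (w (st + m.-1)) (w st) ->
  (forall t, (0 < t < m)%N -> E (st + t) != E st) -> ~ hive_vertex n h.
Proof.
move=> m_gt0 wrap first.
have step t : walk_step (w (st + t %% m)) (w (st + t.+1 %% m)).
  have t_lt : (t %% m < m)%N by rewrite ltn_pmod.
  have [lt_m|] := ltnP (t %% m).+1 m.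
    have -> : (t.+1 %% m = (t %% m).+1)%N.
      by rewrite {1}(divn_eq t m) -addnS modnMDl modn_small.
    by rewrite addnS; apply: w_step.
  move=> le_m; have tm : (t %% m).+1 = m by apply/eqP; rewrite eqn_leq le_m t_lt.
  have -> : (t.+1 %% m = 0)%N by rewrite {1}(divn_eq t m) -addnS tm modnMDl modnn.
  by rewrite addn0; have -> : (t %% m = m.-1)%N by lia.
apply: (closed_walk_not_vertex (c := fun t => w (st + t %% m)) m_gt0 (fun t => w_state _) step).
  by rewrite modnn mod0n.
move=> t /andP[t_gt0 t_lt]; rewrite mod0n addn0 modn_small //.
by apply: first; rewrite t_gt0.
Qed.

Lemma walk_edges_repeat : exists i j, (i < j)%N /\ E i = E j.
Proof.
have E_bound t : [/\ ((E t).1.1 < 3)%N, ((E t).1.2 < n.+1)%N & ((E t).2 < n.+1)%N].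
  have [k3 V _ _] := w_state t; move: (valid_tri_edge V k3).
  by case: (tri_edge _ _) => [[k a b]] /= /andP[? ?]; split => //; lia.
pose code (t : 'I_(3 * n.+1 * n.+1).+1) : 'I_3 * 'I_n.+1 * 'I_n.+1 :=
  (inord (E t).1.1, inord (E t).1.2, inord (E t).2).
have [x [y xy code_xy]] : exists x, exists2 y, x != y & code x = code y.
  apply/injectivePn; apply/negP => /injectiveP/leq_card.
  by rewrite !card_prod !card_ord; lia.
have Exy : E x = E y.
  have [a1 a2 a3] := E_bound x; have [b1 b2 b3] := E_bound y.
  case: code_xy => /(congr1 val) e1 /(congr1 val) e2 /(congr1 val) e3.
  rewrite /= !inordK // in e1 e2 e3.
  by move: e1 e2 e3; case: (E x) => [[? ?] ?]; case: (E y) => [[? ?] ?] /= -> -> ->.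
case: (ltngtP x y) => [lt|gt|/val_inj eq]; first by exists x, y.
  by exists y, x.
by rewrite eq eqxx in xy.
Qed.

Lemma walk_reversal_closes i0 j0 : (i0 < j0)%N ->
  w j0 = (across (w i0).1 (w i0).2, (w i0).2) ->
  (forall a b, (a < b)%N -> (b < j0)%N -> E a != E b) ->
  (i0.+1 < j0)%N /\ walk_step (w j0.-1) (w i0.+1).
Proof.
move=> ij Wj dist.
have j2 : (i0.+1 < j0)%N.
  rewrite ltn_neqAle ij andbT; apply/eqP => ej.
  by apply: (walk_step_no_return (w_state i0)); rewrite -Wj -ej.
split => //; have bS : j0.-1.+1 = j0 by rewrite prednK //; lia.
apply: walk_step_shortcut (w_state i0) (w_state j0.-1) (w_step i0) _ _.
  by have := w_step j0.-1; rewrite bS Wj.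
move=> Eab; suff -> : i0.+1 = j0.-1 by [].
case: (ltnP i0.+1 j0.-1) => [ab|]; last by lia.
by have := dist _ _ ab ltac:(lia); rewrite Eab eqxx.
Qed.

Lemma walk_first_repeat i0 j0 : (i0 < j0)%N -> E i0 = E j0 ->
  (forall a b, (a < b)%N -> (b < j0)%N -> E a != E b) -> ~ hive_vertex n h.
Proof.
move=> ij Eij dist.
have [k3 _ _ _] := w_state i0; have [k3j _ _ _] := w_state j0.
have later_neq st t : (st < j0)%N -> (0 < t)%N -> (st + t < j0)%N -> E (st + t) != E st.
  by move=> st_lt t_gt0 lt; rewrite eq_sym; apply: dist; lia.
have [Ek [Wj|Wj]] := tri_edge_inj k3 k3j Eij.
  apply: (@closed_walk_from i0 (j0 - i0)); first by rewrite subn_gt0.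
    have -> : (i0 + (j0 - i0).-1 = j0.-1)%N by lia.
    have -> : w i0 = w j0 by case: (w j0) Wj Ek => ? ? /= -> <-; case: (w i0).
    by have := w_step j0.-1; rewrite prednK //; lia.
  by move=> t /andP[t_gt0 t_lt]; apply: later_neq; lia.
have [j2 wrap] : (i0.+1 < j0)%N /\ walk_step (w j0.-1) (w i0.+1).
  by apply: walk_reversal_closes => //; case: (w j0) Wj Ek => ? ? /= -> <-.
apply: (@closed_walk_from i0.+1 (j0 - i0.+1)); first by rewrite subn_gt0.
  by have -> : (i0.+1 + (j0 - i0.+1).-1 = j0.-1)%N by lia.
by move=> t /andP[t_gt0 t_lt]; apply: later_neq; lia.
Qed.

Lemma infinite_walk_not_vertex : ~ hive_vertex n h.
Proof.
have [i [j [ij Eij]]] := walk_edges_repeat.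
pose P j := [exists i : 'I_j, E i == E j].
have exP : exists j, P j by exists j; apply/existsP; exists (Ordinal ij); rewrite Eij.
case: (ex_minnP exP) => j0 /existsP [i0 /eqP Ei0] j0_min.
apply: (walk_first_repeat (ltn_ord i0) Ei0) => a b ab bj; apply/negP => /eqP Eab.
have : P b by apply/existsP; exists (Ordinal ab); apply/eqP.
by move/j0_min; rewrite leqNgt bj.
Qed.

End InfiniteWalk.

Lemma bad_edge_not_vertex T k : valid_tri n T -> (k < 3)%N ->
  ~ good (edge_label h (tri_edge T k)) -> ~ hive_vertex n h.
Proof.
move=> V k3 bad; have [s0 state0] := bad_edge_walk_state V k3 bad.
have [w [w_state w_step]] := infinite_walk state0.
exact: infinite_walk_not_vertex w_state w_step.
Qed.

Lemma hive_vertex_good : hive_vertex n h -> forall p q, in_H n p q -> good (h p q).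
Proof.
move=> vertex p q; rewrite /in_H => Hpq.
elim: p Hpq => [|p IH] Hpq; first by apply: good_border; rewrite /in_B /in_H eqxx; lia.
have -> : h p.+1 q = h p q + edge_label h (tri_edge (true, p, q) 0) by rewrite /=; ring.
apply: goodD; first by apply: IH; lia.
apply: NNPP => bad; apply: (bad_edge_not_vertex _ _ bad) => //=; lia.
Qed.

End Walk.

Section IntCombBorder.
Variables (R : realFieldType) (n : nat) (h : labelling R).
Local Open Scope ring_scope.

Lemma int_comb_borderD x y :
  int_comb_border n h x -> int_comb_border n h y -> int_comb_border n h (x + y).
Proof.
move=> [c1 ->] [c2 ->]; exists (fun p q => c1 p q + c2 p q).
rewrite -big_split; apply: eq_bigr => p _; rewrite -big_split; apply: eq_bigr => q _.
by rewrite intrD mulrDl.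
Qed.

Lemma int_comb_borderN x : int_comb_border n h x -> int_comb_border n h (- x).
Proof.
move=> [c ->]; exists (fun p q => - c p q).
rewrite -sumrN; apply: eq_bigr => p _; rewrite -sumrN; apply: eq_bigr => q _.
by rewrite intrN mulNr.
Qed.

Lemma int_comb_border_label p q : in_B n p q -> int_comb_border n h (h p q).
Proof.
move=> B; have /andP[Hpq _] := B.
have [p_lt q_lt] : (p < n.+1)%N /\ (q < n.+1)%N by move: Hpq; rewrite /in_H; lia.
exists (fun a b => ((a == p) && (b == q))%:R).
rewrite (bigD1 (Ordinal p_lt)) //= [X in _ + X]big1 ?addr0; last first.
  move=> a /eqP ap; apply: big1 => b _.
  by rewrite (_ : (a == p :> nat) = false) ?mul0r //; apply/eqP => E; apply/ap/val_inj.
rewrite (bigD1 (Ordinal q_lt)) //= [X in _ + X]big1 ?addr0 ?eqxx ?mul1r //.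
move=> b /andP[_ /eqP bq].
by rewrite (_ : (b == q :> nat) = false) ?andbF ?mul0r //; apply/eqP => E; apply/bq/val_inj.
Qed.

End IntCombBorder.

Theorem proposition3p2 (R : realFieldType) (n : nat) (h : labelling R) :
  (1 <= n)%N ->
  hive_vertex n h ->
  flatspaces_small n h ->
  forall p q : nat, in_H n p q -> int_comb_border n h (h p q).
Proof.
move=> _ vertex small.
exact: hive_vertex_good (@int_comb_borderD R n h) (@int_comb_borderN R n h)
  (@int_comb_border_label R n h) small vertex.
Qed.
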